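(* Let $G,G'$ be finitely generated groups with word metrics $d,d'$ (from Cayley graphs with respect to finite generating sets), let $v_n$ and $v'_n$ be the cardinalities of the balls of radius $n$ around the identity in $G$ and $G'$, let $a:=\lim_n v_n^{1/n}$ and $a':=\lim_n (v'_n)^{1/n}$ be the growth rates, assume $a>1$ and $a'>1$, and set $c:=\log a/\log a'$. Then there exist a non-decreasing function $f:\mathbb Z_{\ge0}\to\mathbb Z_{\ge0}$ and a strictly increasing sequence $(r_j)_{j}$ in $\mathbb Z_{\ge0}$ such that, writing $r'_j:=f(r_j)$, $f(0)=0$, $\sup_n v'_{r'_n}/v_{r_n}<\infty$, $\inf_n v'_{r'_n}/v_{r_n}>0$, and $$\forall m\ \exists N\ \forall n\ge N:\quad |f(n+m)-f(n)-cm|\le 1.$$ *)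

From Stdlib Require Import Reals Lra List.
Import ListNotations.
Open Scope R_scope.

Record Group := {
  carrier :> Type;
  gmul : carrier -> carrier -> carrier;
  gone : carrier;
  ginv : carrier -> carrier;
  gmul_assoc : forall x y z, gmul x (gmul y z) = gmul (gmul x y) z;
  gmul_1l : forall x, gmul gone x = x;
  gmul_Vl : forall x, gmul (ginv x) x = gone
}.

Definition eval_word (G : Group) (w : list G) : G :=
  fold_right (gmul G) (gone G) w.

Definition gen_letter (G : Group) (S : list G) (x : G) : Prop :=
  In x S \/ In (ginv G x) S.

Definition generates (G : Group) (S : list G) : Prop :=
  forall x : G, exists w : list G, Forall (gen_letter G S) w /\ x = eval_word G w.

Definition in_ball (G : Group) (S : list G) (n : nat) (x : G) : Prop :=
  exists w : list G, (length w <= n)%nat /\ Forall (gen_letter G S) w /\ x = eval_word G w.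

Definition has_card (G : Type) (P : G -> Prop) (k : nat) : Prop :=
  exists l : list G, NoDup l /\ length l = k /\ forall x, P x <-> In x l.

From Stdlib Require Import Reals Lra Lia List ZArith IndefiniteDescription.
Import ListNotations.

(* Let K r be the index with v'_(K r) <= v_r < v'_(K r + 1).  The growth rates
   give K r = c r + o(r), and since v'_(k+1) <= (2 |S'| + 1) v'_k the ratio
   v'_(K r) / v_r stays in [1 / (2 |S'| + 1), 1].  Along a very sparse sequence
   r_j the points (r_j, K r_j) are joined by a piecewise linear graph whose slopes
   tend to c; f is its integer part, so f (r_j) = K r_j while f (n + m) - f n is
   eventually within 1 of c m. *)

Section Balls.
Variables (G : Group) (gens : list G).

Lemma gmulV (x : G) : gmul G x (ginv G x) = gone G.
Proof.
  rewrite <- (gmul_1l G (gmul G x (ginv G x))).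
  rewrite <- (gmul_Vl G (ginv G x)) at 1.
  rewrite <- gmul_assoc, (gmul_assoc G (ginv G x) x (ginv G x)), gmul_Vl, gmul_1l.
  apply gmul_Vl.
Qed.

Lemma gmul1 (x : G) : gmul G x (gone G) = x.
Proof. rewrite <- (gmul_Vl G x), gmul_assoc, gmulV. apply gmul_1l. Qed.

Lemma ginvK (x : G) : ginv G (ginv G x) = x.
Proof.
  rewrite <- (gmul1 (ginv G (ginv G x))), <- (gmul_Vl G x), gmul_assoc, gmul_Vl.
  apply gmul_1l.
Qed.

Lemma in_ball_one n : in_ball G gens n (gone G).
Proof. exists []. repeat split; simpl; auto with arith. Qed.

Lemma ball_card_pos n k : has_card G (in_ball G gens n) k -> (1 <= k)%nat.
Proof.
  intros [l [_ [<- Hl]]]. destruct l as [|x l]; simpl; [|lia].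
  destruct (proj1 (Hl (gone G)) (in_ball_one n)).
Qed.

Lemma ball_card_mono n m k k' : (n <= m)%nat ->
  has_card G (in_ball G gens n) k -> has_card G (in_ball G gens m) k' -> (k <= k')%nat.
Proof.
  intros Hnm [l [Hl [<- Hball]]] [l' [_ [<- Hball']]].
  apply NoDup_incl_length; auto.
  intros x Hx. apply Hball'. apply Hball in Hx as [w [Hw Hw']].
  exists w. split; [lia | exact Hw'].
Qed.

Lemma ball_card_succ n k k' :
  has_card G (in_ball G gens n) k -> has_card G (in_ball G gens (S n)) k' ->
  (k' <= (2 * length gens + 1) * k)%nat.
Proof.
  intros [l [_ [<- Hball]]] [l' [Hl' [<- Hball']]].
  set (letters := gens ++ map (ginv G) gens ++ [gone G]).
  assert (Hlen : length letters = (2 * length gens + 1)%nat).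
  { unfold letters. rewrite !length_app, length_map. simpl. lia. }
  rewrite <- Hlen, <- (length_prod letters l),
    <- (length_map (fun p => gmul G (fst p) (snd p))).
  apply NoDup_incl_length; auto.
  intros x Hx. apply Hball' in Hx as [w [Hw [Hletters ->]]]. apply in_map_iff.
  destruct w as [|s w].
  - exists (gone G, gone G). split; [apply gmul_1l|].
    apply in_prod; [|apply Hball, in_ball_one].
    unfold letters. rewrite !in_app_iff. simpl. auto.
  - inversion Hletters as [|? ? Hs Hw']; subst.
    exists (s, eval_word G w). split; [reflexivity|]. apply in_prod.
    + unfold letters. rewrite !in_app_iff, in_map_iff.
      destruct Hs as [Hs | Hs]; [now left|].
      right; left. exists (ginv G s). split; [apply ginvK | exact Hs].
    + apply Hball. exists w. simpl in Hw. repeat split; auto with arith.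
Qed.

End Balls.

Open Scope R_scope.

Definition eventually (P : nat -> Prop) : Prop :=
  exists N, forall n, (N <= n)%nat -> P n.

Definition log_growth (u : nat -> nat) (L : R) : Prop :=
  forall eta, 0 < eta ->
    eventually (fun n => INR n * (L - eta) <= ln (INR (u n)) <= INR n * (L + eta)).

Lemma ln_le_compat x y : 0 < x -> x <= y -> ln x <= ln y.
Proof. intros Hx [Hxy | ->]; [left; now apply ln_increasing | lra]. Qed.

Lemma log_growth_of_root_cv (u : nat -> nat) (a : R) : 0 < a ->
  Un_cv (fun n => Rpower (INR (u n)) (/ INR n)) a -> log_growth u (ln a).
Proof.
  intros Ha Hcv eta Heta.
  assert (Hln : continuity_pt ln a).
  { apply derivable_continuous_pt. exists (/ a). now apply derivable_pt_lim_ln. }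
  destruct (continuity_seq ln _ _ Hln Hcv eta Heta) as [N HN].
  exists (S N). intros n Hn.
  specialize (HN n ltac:(lia)). unfold R_dist in HN. rewrite ln_Rpower in HN.
  apply Rabs_def2 in HN.
  assert (Hn0 : 0 < INR n) by (apply lt_0_INR; lia).
  replace (ln (INR (u n))) with (INR n * (/ INR n * ln (INR (u n)))) by (field; lra).
  split; apply Rmult_le_compat_l; lra.
Qed.

Lemma log_growth_unbounded (u : nat -> nat) (L : R) :
  (forall n, (1 <= u n)%nat) -> 0 < L -> log_growth u L ->
  forall X, eventually (fun n => X < INR (u n)).
Proof.
  intros Hu HL Hg X.
  destruct (Hg (L / 2) ltac:(lra)) as [N1 HN1].
  destruct (INR_unbounded (2 * ln (Rmax X 1) / L)) as [N2 HN2].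
  exists (max N1 N2). intros n Hn.
  destruct (HN1 n ltac:(lia)) as [Hlow _].
  assert (HN2n : INR N2 <= INR n) by (apply le_INR; lia).
  assert (HX : 2 * ln (Rmax X 1) < INR n * L).
  { apply (Rmult_lt_compat_r L) in HN2; [|lra].
    unfold Rdiv in HN2. rewrite Rmult_assoc, Rinv_l in HN2 by lra. nra. }
  assert (H1 : 1 <= INR (u n)) by apply (le_INR 1), Hu.
  apply Rle_lt_trans with (Rmax X 1); [apply Rmax_l|].
  apply ln_lt_inv; [apply Rlt_le_trans with 1; [lra | apply Rmax_r] | lra | lra].
Qed.

(* With eta <= L' / 2 and eta (L + L') <= eps L'^2 / 4, both (L + eta) / (L' - eta)
   and (L - eta) / (L' + eta) lie within eps / 2 of L / L'. *)
Lemma log_sandwich_linear (L L' eps : R) : 0 < L -> 0 < L' -> 0 < eps ->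
  exists eta, 0 < eta /\ forall k r, 2 / eps <= r ->
    k * (L' - eta) <= r * (L + eta) -> r * (L - eta) <= (k + 1) * (L' + eta) ->
    Rabs (k - L / L' * r) <= eps * r.
Proof.
  intros HL HL' Heps.
  set (eta := Rmin (L' / 2) (eps * (L' * L') / (4 * (L + L')))).
  assert (Heta1 : eta <= L' / 2) by apply Rmin_l.
  assert (Heta2 : eta * (L + L') <= eps * (L' * L') / 4).
  { assert (H : eta <= eps * (L' * L') / (4 * (L + L'))) by apply Rmin_r.
    apply (Rmult_le_compat_r (L + L')) in H; [|lra].
    replace (eps * (L' * L') / (4 * (L + L')) * (L + L')) with (eps * (L' * L') / 4)
      in H by (field; lra).
    exact H. }
  assert (Heta : 0 < eta).
  { apply Rmin_glb_lt; [lra|].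
    apply Rdiv_lt_0_compat; [apply Rmult_lt_0_compat; [|nra] | ]; lra. }
  exists eta. split; [exact Heta|].
  intros k r Hr Hup Hlow.
  assert (Hepsr : 2 <= eps * r).
  { apply (Rmult_le_compat_l eps) in Hr; [|lra].
    replace (eps * (2 / eps)) with 2 in Hr by (field; lra). lra. }
  assert (Hr0 : 0 < r) by nra.
  assert (Hk_up : k - L / L' * r <= eps * r).
  { apply (Rmult_le_reg_r (L' * (L' - eta))); [nra|].
    replace ((k - L / L' * r) * (L' * (L' - eta)))
      with (k * (L' - eta) * L' - r * L * (L' - eta)) by (field; lra).
    assert (k * (L' - eta) * L' <= r * (L + eta) * L') by nra.
    assert (r * (eta * (L + L')) <= r * (eps * (L' * L') / 4)) by nra.
    assert (L' * L' / 4 <= L' * (L' - eta)) by nra.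
    assert (eps * r * (L' * L' / 4) <= eps * r * (L' * (L' - eta)))
      by (apply Rmult_le_compat_l; nra).
    nra. }
  assert (Hk_low : L / L' * r - k - 1 <= eps * r / 4).
  { apply (Rmult_le_reg_r (L' * (L' + eta))); [nra|].
    replace ((L / L' * r - k - 1) * (L' * (L' + eta)))
      with (r * L * (L' + eta) - (k + 1) * (L' + eta) * L') by (field; lra).
    assert (r * (L - eta) * L' <= (k + 1) * (L' + eta) * L') by nra.
    assert (r * (eta * (L + L')) <= r * (eps * (L' * L') / 4)) by nra.
    assert (L' * L' <= L' * (L' + eta)) by nra.
    assert (eps * r * (L' * L') <= eps * r * (L' * (L' + eta)))
      by (apply Rmult_le_compat_l; nra).
    nra. }
  apply Rabs_le. split; lra.
Qed.

Section Bracket.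
Variable w : nat -> nat.
Hypothesis w_mono : forall n m, (n <= m)%nat -> (w n <= w m)%nat.

Lemma bracket_exists T k : (w 0 <= T)%nat -> (T < w k)%nat ->
  exists i, (w i <= T < w (S i))%nat.
Proof.
  intros H0. induction k as [|k IH]; intros Hk; [lia|].
  destruct (Nat.lt_ge_cases T (w k)) as [H|H]; [now apply IH | now exists k].
Qed.

Lemma bracket_index : (forall T, exists k, (T < w k)%nat) ->
  exists idx : nat -> nat, forall T, (w 0 <= T)%nat -> (w (idx T) <= T < w (S (idx T)))%nat.
Proof.
  intros Hunb.
  assert (H : forall T, exists i, (w 0 <= T)%nat -> (w i <= T < w (S i))%nat).
  { intros T. destruct (Nat.le_gt_cases (w 0) T) as [HT|HT]; [|exists O; lia].
    destruct (Hunb T) as [k Hk]. destruct (bracket_exists T k HT Hk) as [i Hi].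
    now exists i. }
  exact (functional_choice _ H).
Qed.

Lemma bracket_le i j T T' : (w i <= T)%nat -> (T' < w (S j))%nat -> (T <= T')%nat ->
  (i <= j)%nat.
Proof.
  intros Hi Hj HT. destruct (Nat.le_gt_cases i j) as [|Hji]; [assumption|].
  specialize (w_mono (S j) i Hji). lia.
Qed.

End Bracket.

Lemma bracket_linear (u w K : nat -> nat) (L L' : R) :
  (forall n, (1 <= u n)%nat) -> (forall n, (1 <= w n)%nat) ->
  (forall n m, (n <= m)%nat -> (w n <= w m)%nat) -> 0 < L -> 0 < L' ->
  log_growth u L -> log_growth w L' ->
  eventually (fun r => (w (K r) <= u r < w (S (K r)))%nat) ->
  forall eps, 0 < eps ->
    eventually (fun r => Rabs (INR (K r) - L / L' * INR r) <= eps * INR r).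
Proof.
  intros Hu Hw Hwm HL HL' Hgu Hgw [R0 HK] eps Heps.
  destruct (log_sandwich_linear L L' eps HL HL' Heps) as [eta [Heta Hsandwich]].
  destruct (Hgu eta Heta) as [N HN].
  destruct (Hgw eta Heta) as [N' HN'].
  destruct (log_growth_unbounded u L Hu HL Hgu (INR (w N'))) as [R1 HR1].
  destruct (INR_unbounded (2 / eps)) as [R2 HR2].
  exists (R0 + N + R1 + R2)%nat. intros r Hr.
  destruct (HK r ltac:(lia)) as [Hlow Hup].
  assert (HKN' : (N' <= K r)%nat).
  { specialize (HR1 r ltac:(lia)). apply INR_lt in HR1.
    apply (bracket_le w Hwm N' (K r) (w N') (u r)); lia. }
  destruct (HN r ltac:(lia)) as [Hu_low Hu_up].
  destruct (HN' (K r) HKN') as [HK_low _].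
  destruct (HN' (S (K r)) ltac:(lia)) as [_ HSK_up]. rewrite S_INR in HSK_up.
  assert (H1 : 1 <= INR (w (K r))) by apply (le_INR 1), Hw.
  assert (H1' : 1 <= INR (u r)) by apply (le_INR 1), Hu.
  apply le_INR, ln_le_compat in Hlow; [|lra].
  apply lt_INR, ln_increasing in Hup; [|lra].
  apply Hsandwich; [|lra|lra].
  assert (INR R2 <= INR r) by (apply le_INR; lia). lra.
Qed.

Lemma matching_index (v v' : nat -> nat) (L L' : R) :
  (forall n, (1 <= v n)%nat) -> (forall n, (1 <= v' n)%nat) ->
  (forall n m, (n <= m)%nat -> (v n <= v m)%nat) ->
  (forall n m, (n <= m)%nat -> (v' n <= v' m)%nat) -> 0 < L -> 0 < L' ->
  log_growth v L -> log_growth v' L' ->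
  exists (K : nat -> nat) (R0 : nat),
    (forall r, (R0 <= r)%nat -> (v' (K r) <= v r < v' (S (K r)))%nat) /\
    (forall r r', (R0 <= r)%nat -> (r <= r')%nat -> (K r <= K r')%nat) /\
    (forall eps, 0 < eps ->
       eventually (fun r => Rabs (INR (K r) - L / L' * INR r) <= eps * INR r)).
Proof.
  intros Hv Hv' Hvm Hv'm HL HL' Hg Hg'.
  destruct (bracket_index v') as [idx Hidx].
  { intros T. destruct (log_growth_unbounded v' L' Hv' HL' Hg' (INR T)) as [N HN].
    exists N. apply INR_lt, HN. lia. }
  destruct (log_growth_unbounded v L Hv HL Hg (INR (v' O))) as [R0 HR0].
  assert (HK : forall r, (R0 <= r)%nat -> (v' (idx (v r)) <= v r < v' (S (idx (v r))))%nat).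
  { intros r Hr. apply Hidx. apply Nat.lt_le_incl, INR_lt, HR0, Hr. }
  exists (fun r => idx (v r)), R0. split; [exact HK | split].
  - intros r r' Hr Hrr'.
    apply (bracket_le v' Hv'm _ _ (v r) (v r')); [apply HK | apply HK | apply Hvm]; lia.
  - apply (bracket_linear v v'); auto. now exists R0.
Qed.

Lemma increasing_of_succ (r : nat -> nat) :
  (forall j, (r j < r (S j))%nat) -> forall i j, (i < j)%nat -> (r i < r j)%nat.
Proof.
  intros Hr i j. induction j as [|j IH]; intros Hij; [lia|].
  pose proof (Hr j). destruct (Nat.eq_dec i j) as [->|]; [lia|].
  specialize (IH ltac:(lia)). lia.
Qed.

Lemma increasing_lt_inv (r : nat -> nat) :
  (forall j, (r j < r (S j))%nat) -> forall i j, (r i < r j)%nat -> (i < j)%nat.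
Proof.
  intros Hr i j H. destruct (Nat.lt_ge_cases i j) as [|Hji]; [assumption|].
  destruct (Nat.eq_dec j i) as [->|]; [lia|].
  pose proof (increasing_of_succ r Hr j i ltac:(lia)). lia.
Qed.

Section Interpolation.
Variables (r : nat -> nat) (y : nat -> R).
Hypothesis r0 : r 0 = 0%nat.
Hypothesis r_lt_succ : forall j, (r j < r (S j))%nat.

Fixpoint seg (n : nat) : nat :=
  match n with
  | O => O
  | S n' => if Nat.leb (r (S (seg n'))) (S n') then S (seg n') else seg n'
  end.

Lemma seg_spec n : (r (seg n) <= n < r (S (seg n)))%nat.
Proof.
  induction n as [|n IH]; simpl.
  - rewrite r0. pose proof (r_lt_succ 0). lia.
  - destruct (Nat.leb_spec (r (S (seg n))) (S n)).
    + pose proof (r_lt_succ (S (seg n))). lia.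
    + lia.
Qed.

Lemma seg_unique j n : (r j <= n < r (S j))%nat -> seg n = j.
Proof.
  intros Hj. pose proof (seg_spec n).
  assert (seg n < S j)%nat by (apply (increasing_lt_inv r r_lt_succ); lia).
  assert (j < S (seg n))%nat by (apply (increasing_lt_inv r r_lt_succ); lia).
  lia.
Qed.

Lemma seg_ge j n : (r j <= n)%nat -> (j <= seg n)%nat.
Proof.
  intros Hj. pose proof (seg_spec n).
  apply Nat.lt_succ_r, (increasing_lt_inv r r_lt_succ). lia.
Qed.

Definition slope (j : nat) : R := (y (S j) - y j) / (INR (r (S j)) - INR (r j)).

Fixpoint interp (n : nat) : R :=
  match n with
  | O => y O
  | S n' => interp n' + slope (seg n')
  end.

Lemma interp_on_segment j t : interp (r j) = y j -> (t <= r (S j) - r j)%nat ->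
  interp (r j + t) = y j + slope j * INR t.
Proof.
  intros Hj. induction t as [|t IH]; intros Ht.
  - rewrite Nat.add_0_r, Hj. simpl. ring.
  - rewrite Nat.add_succ_r, S_INR. cbn [interp]. rewrite IH, (seg_unique j) by lia.
    ring.
Qed.

Lemma interp_at j : interp (r j) = y j.
Proof.
  induction j as [|j IH]; [now rewrite r0|].
  pose proof (r_lt_succ j) as Hj.
  replace (r (S j)) with (r j + (r (S j) - r j))%nat at 1 by lia.
  rewrite (interp_on_segment j) by (assumption || lia).
  unfold slope. rewrite minus_INR by lia.
  field. apply lt_INR in Hj. lra.
Qed.

Lemma slope_nonneg j : y j <= y (S j) -> 0 <= slope j.
Proof.
  intros Hy. apply Rmult_le_pos; [lra|].
  apply Rlt_le, Rinv_0_lt_compat, Rlt_0_minus, lt_INR, r_lt_succ.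
Qed.

Lemma interp_mono : (forall j, y j <= y (S j)) ->
  forall n m, (n <= m)%nat -> interp n <= interp m.
Proof.
  intros Hy n m Hnm. induction Hnm as [|m _ IH]; [lra|].
  cbn [interp]. pose proof (slope_nonneg (seg m) (Hy (seg m))). lra.
Qed.

Lemma interp_increment (c e : R) (J : nat) :
  (forall j, (J <= j)%nat -> Rabs (slope j - c) <= e) ->
  forall n m, (r J <= n)%nat -> Rabs (interp (n + m) - interp n - c * INR m) <= INR m * e.
Proof.
  intros Hslope n m Hn. induction m as [|m IH].
  - rewrite Nat.add_0_r. simpl. replace (interp n - interp n - c * 0) with 0 by ring.
    rewrite Rabs_R0. lra.
  - rewrite Nat.add_succ_r, S_INR. cbn [interp].
    replace (interp (n + m) + slope (seg (n + m)) - interp n - c * (INR m + 1))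
      with ((interp (n + m) - interp n - c * INR m) + (slope (seg (n + m)) - c)) by ring.
    eapply Rle_trans; [apply Rabs_triang|].
    pose proof (Hslope (seg (n + m)) (seg_ge J (n + m) ltac:(lia))). lra.
Qed.

End Interpolation.

Lemma Int_part_le x y : x <= y -> (Int_part x <= Int_part y)%Z.
Proof.
  intros Hxy. destruct (base_Int_part x), (base_Int_part y).
  destruct (Z.le_gt_cases (Int_part x) (Int_part y)) as [|Hlt]; [assumption|].
  assert (IZR (Int_part y) + 1 <= IZR (Int_part x))
    by (rewrite <- plus_IZR; apply IZR_le; lia).
  lra.
Qed.

Lemma Int_part_nonneg x : 0 <= x -> (0 <= Int_part x)%Z.
Proof.
  intros Hx. destruct (base_Int_part x).
  assert (-1 < Int_part x)%Z by (apply lt_IZR; lra). lia.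
Qed.

(* The difference of integer parts is an integer strictly within 1 + d of t; for
   d small enough, the only such integers lie within 1 of t. *)
Lemma Int_part_sub_near (t : R) : exists d, 0 < d /\ forall x y,
  Rabs (y - x - t) <= d -> Rabs (IZR (Int_part y) - IZR (Int_part x) - t) <= 1.
Proof.
  set (q := Int_part t). destruct (base_Int_part t) as [Hq1 Hq2]. fold q in Hq1, Hq2.
  assert (Hz : forall d x y, Rabs (y - x - t) <= d ->
    t - 1 - d < IZR (Int_part y - Int_part x) < t + 1 + d).
  { intros d x y Hd. destruct (base_Int_part x), (base_Int_part y).
    pose proof (Rle_abs (y - x - t)). pose proof (Rle_abs (- (y - x - t))).
    rewrite Rabs_Ropp in *. rewrite minus_IZR. lra. }
  assert (Hd : exists d, 0 < d /\ IZR (q - 2) <= t - 1 - d /\ t + 1 + d <= IZR (q + 2) /\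
    (IZR q = t \/ IZR (q - 1) <= t - 1 - d)).
  { rewrite plus_IZR, !minus_IZR.
    destruct (Req_dec (IZR q) t) as [Ht|Ht].
    - exists 1. lra.
    - exists (Rmin (t - IZR q) (IZR q + 1 - t)).
      pose proof (Rmin_l (t - IZR q) (IZR q + 1 - t)).
      pose proof (Rmin_r (t - IZR q) (IZR q + 1 - t)).
      split; [apply Rmin_glb_lt|]; lra. }
  destruct Hd as [d (Hd & Hlow & Hup & Hcase)].
  exists d. split; [exact Hd|]. intros x y Hxy.
  destruct (Hz d x y Hxy) as [Hzl Hzu].
  set (z := (Int_part y - Int_part x)%Z) in *.
  assert (Hzq : (q - 2 < z < q + 2)%Z) by (split; apply lt_IZR; lra).
  rewrite <- minus_IZR. fold z. apply Rabs_le.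
  destruct Hcase as [Ht | Ht].
  - assert (IZR (q - 1) <= IZR z <= IZR (q + 1)) by (split; apply IZR_le; lia).
    rewrite plus_IZR, minus_IZR in *. lra.
  - assert (q - 1 < z)%Z by (apply lt_IZR; lra).
    assert (IZR q <= IZR z <= IZR (q + 1)) by (split; apply IZR_le; lia).
    rewrite plus_IZR in *. lra.
Qed.

Lemma slope_error (x0 x1 y0 y1 c e : R) : 0 <= x0 -> 0 <= y0 -> 0 <= c -> 0 < e < 1 ->
  0 < x1 -> x0 + y0 <= e * x1 -> Rabs (y1 - c * x1) <= e * x1 ->
  Rabs ((y1 - y0) / (x1 - x0) - c) <= (2 + c) * e / (1 - e).
Proof.
  intros Hx0 Hy0 Hc He Hx1 Hsmall Hnear.
  assert (Hgap : (1 - e) * x1 <= x1 - x0) by nra.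
  assert (Hgap0 : 0 < x1 - x0) by nra.
  replace ((y1 - y0) / (x1 - x0) - c)
    with (((y1 - c * x1) - (y0 - c * x0)) * / (x1 - x0)) by (field; lra).
  assert (Herr : Rabs ((y1 - c * x1) - (y0 - c * x0)) <= (2 + c) * e * x1).
  { pose proof (Rle_abs (y1 - c * x1)). pose proof (Rle_abs (- (y1 - c * x1))).
    rewrite Rabs_Ropp in *. apply Rabs_le. split; nra. }
  rewrite Rabs_mult, Rabs_inv, (Rabs_pos_eq (x1 - x0)) by lra.
  apply Rle_trans with ((2 + c) * e * x1 * / (x1 - x0)).
  { apply Rmult_le_compat_r; [left; apply Rinv_0_lt_compat|]; lra. }
  apply (Rmult_le_reg_r (x1 - x0)); [lra|].
  rewrite Rmult_assoc, Rinv_l, Rmult_1_r by lra.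
  apply Rle_trans with ((2 + c) * e / (1 - e) * ((1 - e) * x1)); [right; field; lra|].
  apply Rmult_le_compat_l; [|exact Hgap].
  apply Rmult_le_pos; [nra | left; apply Rinv_0_lt_compat; lra].
Qed.

Lemma ratio_bounded_above (x y : nat -> nat) (A : nat) :
  (forall n, (1 <= y n)%nat) -> (forall n, (x n <= A * y n)%nat) ->
  exists M, forall n, INR (x n) / INR (y n) <= M.
Proof.
  intros Hy Hxy. exists (INR A). intros n.
  pose proof (le_INR _ _ (Hy n)). pose proof (le_INR _ _ (Hxy n)). rewrite mult_INR in *.
  simpl in *. unfold Rdiv. apply (Rmult_le_reg_r (INR (y n))); [lra|].
  rewrite Rmult_assoc, Rinv_l, Rmult_1_r by lra. lra.
Qed.

Lemma ratio_bounded_below (x y : nat -> nat) (B : nat) :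
  (forall n, (1 <= y n)%nat) -> (forall n, (y n <= B * x n)%nat) ->
  exists eps, 0 < eps /\ forall n, eps <= INR (x n) / INR (y n).
Proof.
  intros Hy Hyx.
  assert (HB : (1 <= B)%nat) by (pose proof (Hy O); pose proof (Hyx O); nia).
  apply le_INR in HB. simpl in HB.
  exists (/ INR B). split; [apply Rinv_0_lt_compat; lra|]. intros n.
  pose proof (le_INR _ _ (Hy n)). simpl in *.
  unfold Rdiv. apply (Rmult_le_reg_l (INR B * INR (y n))); [nra|].
  replace (INR B * INR (y n) * / INR B) with (INR (y n)) by (field; lra).
  replace (INR B * INR (y n) * (INR (x n) * / INR (y n))) with (INR B * INR (x n))
    by (field; lra).
  rewrite <- mult_INR. apply le_INR, Hyx.
Qed.

Section Matching.
Variables (K Rf : nat -> nat) (R0 : nat) (c : R).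
Hypothesis c_nonneg : 0 <= c.
Hypothesis K_mono : forall r r', (R0 <= r)%nat -> (r <= r')%nat -> (K r <= K r')%nat.
Hypothesis K_near : forall j r, (Rf j <= r)%nat ->
  Rabs (INR (K r) - c * INR r) <= / (INR j + 1) * INR r.

(* Each sample lies so far beyond the previous one that the previous point
   barely affects the slope of the next segment. *)
Fixpoint sample (j : nat) : nat :=
  match j with
  | O => O
  | S j' => (R0 + Rf j' + S j' * (sample j' + K (sample j') + 1))%nat
  end.

Definition target (j : nat) : nat :=
  match j with
  | O => O
  | S _ => K (sample j)
  end.

Definition matching_interp : nat -> R := interp sample (fun j => INR (target j)).

Definition matching (n : nat) : nat := Z.to_nat (Int_part (matching_interp n)).

Lemma sample_succ j :
  sample (S j) = (R0 + Rf j + S j * (sample j + K (sample j) + 1))%nat.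
Proof. reflexivity. Qed.

Lemma sample_lt_succ j : (sample j < sample (S j))%nat.
Proof. rewrite sample_succ. nia. Qed.

Lemma target_mono j : (target j <= target (S j))%nat.
Proof.
  destruct j as [|j]; [apply Nat.le_0_l|].
  apply K_mono; [rewrite sample_succ; lia | apply Nat.lt_le_incl, sample_lt_succ].
Qed.

Lemma slope_near j : (1 <= j)%nat ->
  Rabs (slope sample (fun j => INR (target j)) j - c) <= (2 + c) / INR j.
Proof.
  destruct j as [|j]; intros Hj; [lia|]. unfold slope.
  set (e := / (INR (S j) + 1)).
  pose proof (pos_INR j).
  assert (He : 0 < e < 1).
  { unfold e. rewrite S_INR. split; [apply Rinv_0_lt_compat; lra|].
    rewrite <- Rinv_1. apply Rinv_lt_contravar; lra. }
  replace ((2 + c) / INR (S j)) with ((2 + c) * e / (1 - e))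
    by (unfold e; rewrite S_INR; field; lra).
  pose proof (sample_lt_succ (S j)) as Hlt. apply lt_INR in Hlt.
  pose proof (pos_INR (sample (S j))).
  apply slope_error; [apply pos_INR | apply pos_INR | exact c_nonneg | exact He | lra | |].
  - assert (Hfar : (S (S j) * (sample (S j) + K (sample (S j))) <= sample (S (S j)))%nat)
      by (rewrite (sample_succ (S j)); nia).
    apply le_INR in Hfar. rewrite mult_INR, plus_INR, (S_INR (S j)) in Hfar.
    unfold e. pose proof (pos_INR (S j)).
    apply (Rmult_le_reg_l (INR (S j) + 1)); [lra|].
    rewrite <- Rmult_assoc, Rinv_r, Rmult_1_l by lra. exact Hfar.
  - apply K_near. rewrite (sample_succ (S j)). lia.
Qed.

Lemma slopes_converge e : 0 < e -> exists J, forall j, (J <= j)%nat ->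
  Rabs (slope sample (fun j => INR (target j)) j - c) <= e.
Proof.
  intros He. destruct (INR_unbounded ((2 + c) / e)) as [N HN].
  exists (S N). intros j Hj.
  apply Rle_trans with ((2 + c) / INR j); [apply slope_near; lia|].
  apply le_INR in Hj. rewrite S_INR in Hj. pose proof (pos_INR N).
  apply (Rmult_lt_compat_l e) in HN; [|lra].
  replace (e * ((2 + c) / e)) with (2 + c) in HN by (field; lra).
  unfold Rdiv. apply (Rmult_le_reg_r (INR j)); [lra|].
  rewrite Rmult_assoc, Rinv_l, Rmult_1_r by lra. nra.
Qed.

Lemma matching_interp_mono n m : (n <= m)%nat -> matching_interp n <= matching_interp m.
Proof.
  apply interp_mono; [apply sample_lt_succ|].
  intros j. apply le_INR, target_mono.
Qed.

Lemma INR_matching n : INR (matching n) = IZR (Int_part (matching_interp n)).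
Proof.
  unfold matching. rewrite INR_IZR_INZ, Z2Nat.id; [reflexivity|].
  apply Int_part_nonneg. apply (matching_interp_mono 0 n), Nat.le_0_l.
Qed.

Lemma matching_mono n m : (n <= m)%nat -> (matching n <= matching m)%nat.
Proof.
  intros Hnm. unfold matching.
  pose proof (Int_part_le _ _ (matching_interp_mono n m Hnm)). lia.
Qed.

Lemma matching_sample j : matching (sample j) = target j.
Proof.
  unfold matching, matching_interp.
  rewrite (interp_at sample _ eq_refl sample_lt_succ), Int_part_INR.
  apply Nat2Z.id.
Qed.

Lemma matching_almost_additive m : eventually (fun n =>
  Rabs (INR (matching (n + m)) - INR (matching n) - c * INR m) <= 1).
Proof.
  destruct (Int_part_sub_near (c * INR m)) as [d [Hd Hnear]].
  assert (Hm : 0 < INR m + 1) by (pose proof (pos_INR m); lra).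
  destruct (slopes_converge (d / (INR m + 1))) as [J HJ].
  { apply Rdiv_lt_0_compat; lra. }
  exists (sample J). intros n Hn. rewrite !INR_matching. apply Hnear.
  eapply Rle_trans.
  { apply (interp_increment sample _ eq_refl sample_lt_succ c _ J HJ n m Hn). }
  apply (Rmult_le_reg_r (INR m + 1)); [lra|].
  replace (INR m * (d / (INR m + 1)) * (INR m + 1)) with (INR m * d) by (field; lra).
  nra.
Qed.

Variables (v v' : nat -> nat) (C : nat).
Hypothesis v_pos : forall n, (1 <= v n)%nat.
Hypothesis v'_pos : forall n, (1 <= v' n)%nat.
Hypothesis C_pos : (1 <= C)%nat.
Hypothesis v'_succ : forall k, (v' (S k) <= C * v' k)%nat.
Hypothesis K_bracket : forall r, (R0 <= r)%nat -> (v' (K r) <= v r < v' (S (K r)))%nat.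

Lemma target_ratio j :
  (v' (target j) <= v' O * v (sample j))%nat /\ (v (sample j) <= C * v O * v' (target j))%nat.
Proof.
  pose proof (v_pos O). pose proof (v'_pos O).
  assert (1 <= C * v' O)%nat by (pose proof C_pos; nia).
  destruct j as [|j]; cbn [target]; [simpl sample; split; nia|].
  assert (HR0 : (R0 <= sample (S j))%nat) by (rewrite sample_succ; lia).
  destruct (K_bracket _ HR0). pose proof (v'_succ (K (sample (S j)))).
  rewrite (Nat.mul_comm C), <- Nat.mul_assoc.
  set (X := (C * v' (K (sample (S j))))%nat) in *. split; nia.
Qed.

Lemma matching_spec : exists f r : nat -> nat,
    (forall n m, (n <= m)%nat -> (f n <= f m)%nat) /\
    (forall n m, (n < m)%nat -> (r n < r m)%nat) /\
    f 0%nat = 0%nat /\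
    (exists M : R, forall n, INR (v' (f (r n))) / INR (v (r n)) <= M) /\
    (exists eps : R, 0 < eps /\ forall n, eps <= INR (v' (f (r n))) / INR (v (r n))) /\
    (forall m : nat, exists N : nat, forall n : nat, (N <= n)%nat ->
       Rabs (INR (f (n + m)%nat) - INR (f n) - c * INR m) <= 1).
Proof.
  exists matching, sample.
  split; [exact matching_mono|].
  split; [exact (increasing_of_succ sample sample_lt_succ)|].
  split; [exact (matching_sample O)|].
  split; [|split; [|exact matching_almost_additive]].
  - apply (ratio_bounded_above _ _ (v' O)); [intros n; apply v_pos|].
    intros n. rewrite matching_sample. apply target_ratio.
  - apply (ratio_bounded_below _ _ (C * v O)); [intros n; apply v_pos|].
    intros n. rewrite matching_sample. apply target_ratio.
Qed.

End Matching.

Theorem lemma3p1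
  (G G' : Group) (S : list G) (S' : list G')
  (hS : generates G S) (hS' : generates G' S')
  (v v' : nat -> nat)
  (hv : forall n, has_card G (in_ball G S n) (v n))
  (hv' : forall n, has_card G' (in_ball G' S' n) (v' n))
  (a a' : R)
  (ha : Un_cv (fun n => Rpower (INR (v n)) (/ INR n)) a)
  (ha' : Un_cv (fun n => Rpower (INR (v' n)) (/ INR n)) a')
  (ha1 : 1 < a) (ha1' : 1 < a') :
  let c := ln a / ln a' in
  exists (f : nat -> nat) (r : nat -> nat),
    (forall n m, (n <= m)%nat -> (f n <= f m)%nat) /\
    (forall n m, (n < m)%nat -> (r n < r m)%nat) /\
    f 0%nat = 0%nat /\
    (exists M : R, forall n, INR (v' (f (r n))) / INR (v (r n)) <= M) /\
    (exists eps : R, 0 < eps /\ forall n, eps <= INR (v' (f (r n))) / INR (v (r n))) /\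
    (forall m : nat, exists N : nat, forall n : nat, (N <= n)%nat ->
       Rabs (INR (f (n + m)%nat) - INR (f n) - c * INR m) <= 1).
Proof.
  intros c.
  pose proof (fun n => ball_card_pos G S n _ (hv n)) as Hv.
  pose proof (fun n => ball_card_pos G' S' n _ (hv' n)) as Hv'.
  assert (Hvm : forall n m, (n <= m)%nat -> (v n <= v m)%nat)
    by (intros n m H; exact (ball_card_mono G S n m _ _ H (hv n) (hv m))).
  assert (Hv'm : forall n m, (n <= m)%nat -> (v' n <= v' m)%nat)
    by (intros n m H; exact (ball_card_mono G' S' n m _ _ H (hv' n) (hv' m))).
  assert (HL : 0 < ln a) by (rewrite <- ln_1; apply ln_increasing; lra).
  assert (HL' : 0 < ln a') by (rewrite <- ln_1; apply ln_increasing; lra).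
  destruct (matching_index v v' (ln a) (ln a') Hv Hv' Hvm Hv'm HL HL'
              (log_growth_of_root_cv v a ltac:(lra) ha)
              (log_growth_of_root_cv v' a' ltac:(lra) ha'))
    as [K [R0 [HK [HKm Hnear]]]].
  assert (Hnear_j : forall j, exists N, forall r, (N <= r)%nat ->
    Rabs (INR (K r) - c * INR r) <= / (INR j + 1) * INR r).
  { intros j. apply Hnear, Rinv_0_lt_compat. pose proof (pos_INR j). lra. }
  destruct (functional_choice _ Hnear_j) as [Rf HRf].
  apply (matching_spec K Rf R0 c) with (C := (2 * length S' + 1)%nat); auto.
  - apply Rlt_le, Rdiv_lt_0_compat; assumption.
  - lia.
  - intros k. exact (ball_card_succ G' S' k _ _ (hv' k) (hv' (Datatypes.S k))).
Qed.
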